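(* Let $N>1$ be an integer and let $C_1,C_2>0$. For $0<y\le 1$, coprime integers $p,q$ with $q\ge1$ and $0<p/q\le 1$, and real $\delta$, define \[ T_y=\frac{1}{q\,(y+2i\delta)^{1/2}}\sum_{m=-\infty}^{\infty} S\!\left(\frac{p}{q},\frac{m}{q}\right)\exp\!\left(-\frac{\pi}{y+2i\delta}\Big(\frac{m}{q}-\frac{1}{N}\Big)^2\right), \qquad S\!\left(\frac{p}{q},t\right)=\sum_{\ell=1}^{q}e^{2\pi i\left(\frac{p}{q}\ell^2+t\ell\right)}. \] Then there is a constant $C$ (independent of $y,p,q,\delta$) such that whenever $q\le C_1 y^{-1/2}$ and $q|\delta|\le C_2 y^{1/2}$ (so that $x=p/q+\delta$ is close to $p/q$): if $N\mid q$, then \[ \left|T_y-S\!\left(\frac{p}{q},\frac{1}{N}\right)\frac{1}{q\,(y+2i\delta)^{1/2}}\right|\le C\,y^{-1/4}; \] and if $N\nmid q$, then $|T_y|\le C\,y^{-1/4}$.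
   Context: $(y+2i\delta)^{1/2}$ denotes the principal branch of the square root (the argument $y+2i\delta$ lies in the right half-plane). *)

From Stdlib Require Import Reals Lra ZArith.
From Coquelicot Require Import Coquelicot.
Open Scope R_scope.

Definition cexp (z : C) : C :=
  (exp (fst z) * cos (snd z), exp (fst z) * sin (snd z)).

Definition csqrt (w : C) : C :=
  (sqrt ((Cmod w + fst w) / 2),
   (if Rle_dec 0 (snd w) then 1 else -1) * sqrt ((Cmod w - fst w) / 2)).

Fixpoint csum1 (n : nat) (f : nat -> C) : C :=
  match n with
  | O => RtoC 0
  | S k => Cplus (csum1 k f) (f (S k))
  end.

Definition gaussS (q : nat) (a t : R) : C :=
  csum1 q (fun l => cexp (0, 2 * PI * (a * INR l ^ 2 + t * INR l))).

Definition is_zseries (f : Z -> C) (l : C) : Prop :=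
  exists a b : C,
    is_series (fun n : nat => f (Z.of_nat n)) a /\
    is_series (fun n : nat => f (- Z.of_nat (S n))%Z) b /\
    l = Cplus a b.

Definition Tterm (N : nat) (y : R) (p q : Z) (delta : R) (m : Z) : C :=
  let w : C := (y, 2 * delta) in
  let u : R := IZR m / IZR q - 1 / INR N in
  Cmult (gaussS (Z.to_nat q) (IZR p / IZR q) (IZR m / IZR q))
        (cexp (Cmult (RtoC (- PI * u ^ 2)) (Cinv w))).

Definition Tpref (y : R) (q : Z) (delta : R) : C :=
  Cinv (Cmult (RtoC (IZR q)) (csqrt (y, 2 * delta))).

(* Each summand has modulus |S(p/q, m/q)| exp(-PI A (mN - q)^2) with
   A = y / (|y + 2 i delta|^2 q^2 N^2).  For p coprime to q the Gauss sum has modulus at most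
   sqrt(2q): |S|^2 is a sum over shifts h of complete sums of cos over an arithmetic
   progression, and these vanish unless 2ph = 0 mod q, i.e. h = 0 or h = q/2.  The hypotheses
   q <= C1 y^(-1/2) and q |delta| <= C2 y^(1/2) give A >= 1/((C1^2 + 4 C2^2) N^2), so away from
   the center m = q/N the summands decay geometrically at a rate independent of y, p, q, delta,
   and the series minus its central term (which is S(p/q, 1/N) when mN = q, i.e. when N | q) is
   O(sqrt q exp(-PI A/2)).  The prefactor 1/(q |y + 2 i delta|^(1/2)) turns this into
   O(y^(-1/4)) because sqrt A exp(-PI A) <= 1. *)

From Stdlib Require Import Reals ZArith Znumtheory Lra Lia.
From Coquelicot Require Import Coquelicot.
Open Scope R_scope.

(** * Finite sums *)

Fixpoint rsum (n : nat) (f : nat -> R) : R :=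
  match n with O => 0 | S k => rsum k f + f k end.

Lemma rsum_ext (n : nat) (f g : nat -> R) :
  (forall i, (i < n)%nat -> f i = g i) -> rsum n f = rsum n g.
Proof.
  induction n as [|n IH]; intros Hfg; simpl; [reflexivity|].
  f_equal; [apply IH; intros|]; apply Hfg; lia.
Qed.

Lemma rsum_plus (n : nat) (f g : nat -> R) : rsum n (fun i => f i + g i) = rsum n f + rsum n g.
Proof. induction n as [|n IH]; simpl; [lra|rewrite IH; ring]. Qed.

Lemma rsum_scal_l (n : nat) (c : R) (f : nat -> R) : rsum n (fun i => c * f i) = c * rsum n f.
Proof. induction n as [|n IH]; simpl; [ring|rewrite IH; ring]. Qed.

Lemma rsum_scal_r (n : nat) (c : R) (f : nat -> R) : rsum n (fun i => f i * c) = rsum n f * c.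
Proof. induction n as [|n IH]; simpl; [ring|rewrite IH; ring]. Qed.

Lemma rsum_le (n : nat) (f g : nat -> R) :
  (forall i, (i < n)%nat -> f i <= g i) -> rsum n f <= rsum n g.
Proof.
  induction n as [|n IH]; intros Hfg; simpl; [lra|].
  assert (rsum n f <= rsum n g) by (apply IH; intros; apply Hfg; lia).
  specialize (Hfg n ltac:(lia)); lra.
Qed.

Lemma rsum_const (n : nat) (c : R) : rsum n (fun _ => c) = INR n * c.
Proof. induction n as [|n IH]; simpl rsum; [simpl; ring|rewrite IH, S_INR; ring]. Qed.

Lemma rsum_nonneg (n : nat) (f : nat -> R) :
  (forall i, (i < n)%nat -> 0 <= f i) -> 0 <= rsum n f.
Proof.
  intros Hf; rewrite <- (Rmult_0_r (INR n)), <- rsum_const; apply rsum_le; exact Hf.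
Qed.

Lemma rsum_mul (n m : nat) (f g : nat -> R) :
  rsum n f * rsum m g = rsum n (fun k => rsum m (fun l => f k * g l)).
Proof.
  rewrite <- rsum_scal_r; apply rsum_ext; intros; symmetry; apply rsum_scal_l.
Qed.

Lemma rsum_swap (n m : nat) (F : nat -> nat -> R) :
  rsum n (fun i => rsum m (fun j => F i j)) = rsum m (fun j => rsum n (fun i => F i j)).
Proof.
  induction n as [|n IH]; simpl.
  - rewrite rsum_const; ring.
  - rewrite IH, <- rsum_plus; reflexivity.
Qed.

Lemma rsum_telescope (n : nat) (F : nat -> R) : rsum n (fun k => F (S k) - F k) = F n - F O.
Proof. induction n as [|n IH]; simpl; [ring|rewrite IH; ring]. Qed.

Lemma rsum_shift (n : nat) (f : nat -> R) : rsum n (fun i => f (S i)) = rsum n f - f O + f n.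
Proof. induction n as [|n IH]; simpl; [ring|rewrite IH; ring]. Qed.

Lemma rsum_periodic (n : nat) (f : nat -> R) : (forall i, f (i + n)%nat = f i) ->
  forall s, rsum n (fun i => f (i + s)%nat) = rsum n f.
Proof.
  intros Hper s; induction s as [|s IH].
  - apply rsum_ext; intros; rewrite Nat.add_0_r; reflexivity.
  - rewrite (rsum_ext n _ (fun i => f (S i + s)%nat)) by (intros; f_equal; lia).
    rewrite (rsum_shift n (fun i => f (i + s)%nat)), IH, Nat.add_0_l, (Nat.add_comm n s), Hper.
    ring.
Qed.

Lemma rsum_indicator_le (n c : nat) : rsum n (fun h => if Nat.eq_dec h c then 1 else 0) <= 1.
Proof.
  assert (E : rsum n (fun h => if Nat.eq_dec h c then 1 else 0) = if Nat.ltb c n then 1 else 0).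
  { induction n as [|n IH]; simpl rsum; [reflexivity|rewrite IH].
    destruct (Nat.eq_dec n c), (Nat.ltb_spec c n), (Nat.ltb_spec c (S n)); lia || lra. }
  rewrite E; destruct (Nat.ltb c n); lra.
Qed.

(** * The Gauss sum bound *)

Lemma fst_csum1 (n : nat) (f : nat -> C) : fst (csum1 n f) = rsum n (fun i => fst (f (S i))).
Proof. induction n as [|n IH]; simpl; [reflexivity|rewrite IH; reflexivity]. Qed.

Lemma snd_csum1 (n : nat) (f : nat -> C) : snd (csum1 n f) = rsum n (fun i => snd (f (S i))).
Proof. induction n as [|n IH]; simpl; [reflexivity|rewrite IH; reflexivity]. Qed.

Lemma cexp_imag (x : R) : cexp (0, x) = (cos x, sin x).
Proof. unfold cexp; simpl; rewrite exp_0; f_equal; ring. Qed.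

Lemma trig_add_2PI_IZR (f : R -> R) : (forall x k, f (x + 2 * INR k * PI) = f x) ->
  forall x z, f (x + 2 * PI * IZR z) = f x.
Proof.
  intros Hf x z; destruct (Z_le_gt_dec 0 z).
  - rewrite <- (Z2Nat.id z), <- INR_IZR_INZ by lia.
    rewrite <- (Hf x (Z.to_nat z)); f_equal; ring.
  - replace z with (- Z.of_nat (Z.to_nat (- z)))%Z by lia.
    rewrite opp_IZR, <- INR_IZR_INZ, <- (Hf _ (Z.to_nat (- z))); f_equal; ring.
Qed.

Lemma cos_add_2PI_IZR (x : R) (z : Z) : cos (x + 2 * PI * IZR z) = cos x.
Proof. exact (trig_add_2PI_IZR cos cos_period x z). Qed.

Lemma sin_add_2PI_IZR (x : R) (z : Z) : sin (x + 2 * PI * IZR z) = sin x.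
Proof. exact (trig_add_2PI_IZR sin sin_period x z). Qed.

(* Multiplying by [2 sin (a/2)] telescopes the sum, and the total phase [n a] is a multiple
   of [2 PI]. *)
Lemma rsum_cos_arith_eq0 (n : nat) (a b : R) (z : Z) :
  INR n * a = 2 * PI * IZR z -> sin (a / 2) <> 0 ->
  rsum n (fun k => cos (a * INR k + b)) = 0.
Proof.
  intros Hna Hs.
  set (F k := sin (a * INR k + b - a / 2)).
  assert (E : 2 * sin (a / 2) * rsum n (fun k => cos (a * INR k + b)) = F n - F O).
  { rewrite <- rsum_scal_l, <- rsum_telescope; apply rsum_ext; intros k _.
    unfold F; rewrite S_INR.
    replace (a * (INR k + 1) + b - a / 2) with (a * INR k + b + a / 2) by field.
    rewrite sin_plus, sin_minus; ring. }
  replace (F n) with (F O) in E.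
  - rewrite Rminus_diag in E; apply Rmult_integral in E as [E|E]; lra.
  - unfold F; rewrite <- (sin_add_2PI_IZR _ z), <- Hna; f_equal; simpl; ring.
Qed.

Lemma sum_cos_sqr_add_sum_sin_sqr (n : nat) (th : nat -> R) :
  rsum n (fun k => cos (th k)) ^ 2 + rsum n (fun k => sin (th k)) ^ 2
  = rsum n (fun k => rsum n (fun l => cos (th l - th k))).
Proof.
  rewrite <- !Rsqr_pow2; unfold Rsqr.
  rewrite !rsum_mul, <- rsum_plus; apply rsum_ext; intros k _.
  rewrite <- rsum_plus; apply rsum_ext; intros l _.
  rewrite cos_minus; ring.
Qed.

Lemma half_period_cases (n h : nat) (p : Z) : (h < n)%nat -> Z.gcd p (Z.of_nat n) = 1%Z ->
  (Z.of_nat n | 2 * p * Z.of_nat h)%Z -> h = O \/ h = (n / 2)%nat.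
Proof.
  intros Hh Hg Hdiv.
  assert (Hdiv2 : (Z.of_nat n | 2 * Z.of_nat h)%Z).
  { apply Z.gauss with p; [|rewrite Z.gcd_comm; exact Hg].
    replace (p * (2 * Z.of_nat h))%Z with (2 * p * Z.of_nat h)%Z by ring; exact Hdiv. }
  destruct Hdiv2 as [w Hw].
  assert (w = 0 \/ w = 1)%Z as [-> | ->] by nia; [left; lia|right].
  apply (Nat.div_unique n 2 h 0); lia.
Qed.

Definition gauss_phase (n : nat) (p m : Z) (l : nat) : R :=
  2 * PI * (IZR p / INR n * INR l ^ 2 + IZR m / INR n * INR l).

Lemma gauss_phase_add_period (n : nat) (p m : Z) (l : nat) : (0 < n)%nat ->
  gauss_phase n p m (l + n) =
  gauss_phase n p m l + 2 * PI * IZR (2 * p * Z.of_nat l + p * Z.of_nat n + m).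
Proof.
  intros Hn; assert (INR n <> 0) by (apply not_0_INR; lia).
  unfold gauss_phase; rewrite plus_INR, !plus_IZR, !mult_IZR, <- !INR_IZR_INZ.
  field; assumption.
Qed.

Lemma gauss_phase_sub (n : nat) (p m : Z) (h k : nat) : (0 < n)%nat ->
  gauss_phase n p m (h + k) - gauss_phase n p m k =
  4 * PI * IZR p * INR h / INR n * INR k + gauss_phase n p m h.
Proof.
  intros Hn; assert (INR n <> 0) by (apply not_0_INR; lia).
  unfold gauss_phase; rewrite plus_INR; field; assumption.
Qed.

(* The sum over [k] vanishes unless [2 p h = 0 mod n], which forces [h = 0] or [h = n/2]. *)
Lemma gauss_autocorr_le (n : nat) (p m : Z) (h : nat) :
  (h < n)%nat -> Z.gcd p (Z.of_nat n) = 1%Z ->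
  rsum n (fun k => cos (gauss_phase n p m (h + S k) - gauss_phase n p m (S k)))
  <= INR n * ((if Nat.eq_dec h 0 then 1 else 0) + (if Nat.eq_dec h (n / 2) then 1 else 0)).
Proof.
  intros Hh Hg.
  assert (Hn : INR n <> 0) by (apply not_0_INR; lia).
  set (al := 4 * PI * IZR p * INR h / INR n).
  set (be := al + gauss_phase n p m h).
  rewrite (rsum_ext n _ (fun k => cos (al * INR k + be))).
  2: { intros k _; rewrite gauss_phase_sub, S_INR by lia; unfold be, al; f_equal; ring. }
  assert (Hle : rsum n (fun k => cos (al * INR k + be)) <= INR n).
  { rewrite <- (Rmult_1_r (INR n)), <- rsum_const; apply rsum_le; intros; apply COS_bound. }
  pose proof (pos_INR n).
  destruct (Req_dec (sin (al / 2)) 0) as [Hs|Hs].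
  - apply sin_eq_0_0 in Hs as [z Hz].
    assert (Hdiv : (Z.of_nat n | 2 * p * Z.of_nat h)%Z).
    { exists z; apply eq_IZR; rewrite !mult_IZR, <- !INR_IZR_INZ.
      apply Rmult_eq_reg_r with PI; [|exact PI_neq0].
      replace (2 * IZR p * INR h * PI) with (al / 2 * INR n) by (unfold al; field; exact Hn).
      rewrite Hz; ring. }
    destruct (half_period_cases n h p Hh Hg Hdiv) as [E|E];
      destruct (Nat.eq_dec h 0), (Nat.eq_dec h (n / 2)); lia || nra.
  - rewrite (rsum_cos_arith_eq0 n al be (2 * p * Z.of_nat h)); auto.
    + destruct (Nat.eq_dec h 0), (Nat.eq_dec h (n / 2)); nra.
    + unfold al; rewrite !mult_IZR, <- INR_IZR_INZ; field; exact Hn.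
Qed.

Lemma gaussS_Cmod_le (n : nat) (p m : Z) : (0 < n)%nat -> Z.gcd p (Z.of_nat n) = 1%Z ->
  Cmod (gaussS n (IZR p / INR n) (IZR m / INR n)) <= sqrt (2 * INR n).
Proof.
  intros Hn Hg; set (th := gauss_phase n p m).
  apply sqrt_le_1_alt.
  change (fst (csum1 n (fun l => cexp (0, th l))) ^ 2
          + snd (csum1 n (fun l => cexp (0, th l))) ^ 2 <= 2 * INR n).
  rewrite fst_csum1, snd_csum1.
  rewrite (rsum_ext n _ (fun k => cos (th (S k)))) by (intros; rewrite cexp_imag; reflexivity).
  rewrite (rsum_ext n (fun i => snd _) (fun k => sin (th (S k))))
    by (intros; rewrite cexp_imag; reflexivity).
  rewrite (sum_cos_sqr_add_sum_sin_sqr n (fun k => th (S k))).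
  rewrite (rsum_ext n _ (fun k => rsum n (fun h => cos (th (h + S k)%nat - th (S k))))).
  (* The summands are [n]-periodic in [l], so [l = h + k] with [h < n] covers a full period. *)
  2: { intros k _; set (phi l := cos (th l - th (S k))).
       assert (Hper : forall l, phi (l + n)%nat = phi l).
       { intros l; unfold phi, th; rewrite gauss_phase_add_period by exact Hn.
         rewrite <- (cos_add_2PI_IZR (gauss_phase n p m l - gauss_phase n p m (S k))
                                     (2 * p * Z.of_nat l + p * Z.of_nat n + m)).
         f_equal; ring. }
       change (rsum n (fun l => phi (S l)) = rsum n (fun h => phi (h + S k)%nat)).
       rewrite (rsum_periodic n phi Hper (S k)), <- (rsum_periodic n phi Hper 1).
       apply rsum_ext; intros; f_equal; lia. }
  rewrite rsum_swap.
  eapply Rle_trans; [apply rsum_le; intros h Hh; apply gauss_autocorr_le; assumption|].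
  rewrite rsum_scal_l, rsum_plus.
  pose proof (rsum_indicator_le n 0); pose proof (rsum_indicator_le n (n / 2)).
  pose proof (pos_INR n); nra.
Qed.

(** * Two-sided series with geometric decay *)

Lemma rsum_geom_le (r : R) (M : nat) : 0 <= r < 1 -> rsum M (fun n => r ^ n) <= 1 / (1 - r).
Proof.
  intros Hr.
  assert (E : rsum M (fun n => r ^ n) * (1 - r) = 1 - r ^ M).
  { induction M as [|M IH]; simpl rsum; [simpl; ring|].
    rewrite Rmult_plus_distr_r, IH; simpl; ring. }
  pose proof (pow_le r M ltac:(lra)).
  apply Rmult_le_reg_r with (1 - r); [lra|].
  rewrite E; field_simplify; lra.
Qed.

(* Each distance [|n - s|] is attained at most twice. *)
Lemma rsum_pow_dist_le (r : R) (s M : nat) : 0 <= r < 1 ->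
  rsum M (fun n => r ^ Z.abs_nat (Z.of_nat n - Z.of_nat s)) <= 2 / (1 - r).
Proof.
  intros Hr.
  assert (Hpos : forall k, 0 <= rsum k (fun j => r ^ S j))
    by (intros; apply rsum_nonneg; intros; apply pow_le; lra).
  assert (Hgen : forall s M, rsum M (fun n => r ^ Z.abs_nat (Z.of_nat n - Z.of_nat s))
                             <= 1 / (1 - r) + rsum s (fun j => r ^ S j)).
  { clear s M; intros s; induction s as [|s IH]; intros M.
    - rewrite (rsum_ext M _ (fun n => r ^ n)) by (intros; f_equal; lia).
      pose proof (rsum_geom_le r M Hr); cbn [rsum]; lra.
    - destruct M as [|M]; cbn [rsum].
      { specialize (Hpos s); pose proof (pow_le r (S s) ltac:(lra)).
        assert (0 <= 1 / (1 - r)) by (apply Rdiv_le_0_compat; lra); lra. }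
      set (g n := r ^ Z.abs_nat (Z.of_nat n - Z.of_nat (S s))).
      pose proof (rsum_shift M g) as E.
      rewrite (rsum_ext M (fun n => g (S n)) (fun n => r ^ Z.abs_nat (Z.of_nat n - Z.of_nat s)))
        in E by (intros; unfold g; f_equal; lia).
      assert (g O = r ^ S s) by (unfold g; f_equal; lia).
      fold (g M); specialize (IH M); lra. }
  assert (Hs : rsum s (fun j => r ^ S j) <= 1 / (1 - r)).
  { change (rsum s (fun j => r * r ^ j) <= 1 / (1 - r)).
    pose proof (rsum_scal_l s r (fun j => r ^ j)) as E; cbv beta in E.
    pose proof (rsum_geom_le r s Hr).
    assert (0 <= rsum s (fun j => r ^ j)) by (apply rsum_nonneg; intros; apply pow_le; lra).
    assert (r * rsum s (fun j => r ^ j) <= rsum s (fun j => r ^ j)) by nra.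
    lra. }
  specialize (Hgen s M).
  replace (2 / (1 - r)) with (1 / (1 - r) + 1 / (1 - r)) by (field; lra); lra.
Qed.

Lemma Cmod_sum_n_le (a : nat -> C) (M : nat) :
  Cmod (sum_n a M) <= rsum (S M) (fun n => Cmod (a n)).
Proof.
  induction M as [|M IH].
  - rewrite sum_O; simpl; lra.
  - rewrite sum_Sn; eapply Rle_trans; [apply Cmod_triangle|].
    change (rsum (S (S M)) _) with (rsum (S M) (fun n => Cmod (a n)) + Cmod (a (S M))); lra.
Qed.

Lemma series_Cmod_le (a : nat -> C) (l : C) (B : R) : is_series a l ->
  (forall M, rsum M (fun n => Cmod (a n)) <= B) -> Cmod l <= B.
Proof.
  intros Hl HB.
  assert (L : is_lim_seq (fun M => Cmod (sum_n a M)) (Cmod l))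
    by (eapply filterlim_comp; [apply Hl|apply (filterlim_norm l)]).
  assert (Hle : Rbar_le (Cmod l) B).
  { eapply is_lim_seq_le; [|apply L|apply is_lim_seq_const].
    intros M; eapply Rle_trans; [apply Cmod_sum_n_le|apply HB]. }
  exact Hle.
Qed.

Lemma zseries_geom_bound (f : Z -> C) (s : nat) (G r : R) : 0 <= G -> 0 <= r < 1 ->
  (forall m, Cmod (f m) <= G * r ^ Z.abs_nat (m - Z.of_nat s)) ->
  exists Sig, is_zseries f Sig /\ Cmod Sig <= 3 / (1 - r) * G.
Proof.
  intros HG Hr Hf.
  set (b n := G * r ^ Z.abs_nat (Z.of_nat n - Z.of_nat s)).
  assert (Hneg : forall n, Cmod (f (- Z.of_nat (S n))%Z) <= G * r ^ n).
  { intros n; eapply Rle_trans; [apply Hf|apply Rmult_le_compat_l; [exact HG|]].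
    replace (Z.abs_nat (- Z.of_nat (S n) - Z.of_nat s)) with (n + S s)%nat by lia.
    rewrite pow_add; pose proof (pow_le r n ltac:(lra)).
    assert (r ^ S s <= 1) by (rewrite <- (pow1 (S s)); apply pow_incr; lra).
    nra. }
  assert (Hgeom : ex_series (fun n => G * r ^ n)).
  { exists (G * / (1 - r)); apply (is_series_scal_l G (fun n => r ^ n)).
    apply is_series_geom; rewrite Rabs_pos_eq; lra. }
  assert (Hb : ex_series b).
  { apply (ex_series_incr_n b s); eapply ex_series_ext; [|exact Hgeom].
    intros n; unfold b; do 2 f_equal; lia. }
  destruct (@ex_series_le C_AbsRing C_CompleteNormedModule _ b (fun n => Hf (Z.of_nat n)) Hb)
    as [la Ha].
  destruct (@ex_series_le C_AbsRing C_CompleteNormedModule _ _ Hneg Hgeom) as [lb Hb'].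
  exists (la + lb)%C; split; [exists la, lb; auto|].
  assert (Hla : Cmod la <= 2 * G / (1 - r)).
  { apply (series_Cmod_le _ _ _ Ha); intros M.
    eapply Rle_trans; [apply (rsum_le _ _ b); intros; apply Hf|].
    unfold b; rewrite rsum_scal_l.
    replace (2 * G / (1 - r)) with (G * (2 / (1 - r))) by (field; lra).
    apply Rmult_le_compat_l; [exact HG|apply rsum_pow_dist_le, Hr]. }
  assert (Hlb : Cmod lb <= G / (1 - r)).
  { apply (series_Cmod_le _ _ _ Hb'); intros M.
    eapply Rle_trans; [apply (rsum_le _ _ (fun n => G * r ^ n)); intros; apply Hneg|].
    rewrite rsum_scal_l; replace (G / (1 - r)) with (G * (1 / (1 - r))) by (field; lra).
    apply Rmult_le_compat_l; [exact HG|apply rsum_geom_le, Hr]. }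
  eapply Rle_trans; [apply Cmod_triangle|].
  replace (3 / (1 - r) * G) with (2 * G / (1 - r) + G / (1 - r)) by (field; lra); lra.
Qed.

Lemma is_series_point (c : C) (s : nat) :
  is_series (fun n => if Nat.eq_dec n s then c else RtoC 0) c.
Proof.
  assert (E : forall M, sum_n (fun n => if Nat.eq_dec n s then c else RtoC 0) M
                        = if Nat.leb s M then c else RtoC 0).
  { induction M as [|M IH].
    - rewrite sum_O; destruct (Nat.eq_dec 0 s), (Nat.leb_spec s 0); reflexivity || lia.
    - rewrite sum_Sn, IH.
      destruct (Nat.eq_dec (S M) s), (Nat.leb_spec s M), (Nat.leb_spec s (S M));
        try lia; first [apply Cplus_0_l | apply Cplus_0_r]. }
  eapply filterlim_ext_loc; [|apply filterlim_const].
  exists s; intros M HM; rewrite E; destruct (Nat.leb_spec s M); [reflexivity|lia].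
Qed.

Lemma is_zseries_sub_point (f : Z -> C) (s : nat) (c Sig : C) :
  is_zseries (fun m => f m - (if Z.eq_dec m (Z.of_nat s) then c else RtoC 0))%C Sig ->
  is_zseries f (Sig + c)%C.
Proof.
  intros (a & b & Ha & Hb & ->).
  assert (Hsub : forall x y : C, (x - y + y)%C = x) by (intros; ring).
  assert (Hsub0 : forall x : C, (x - RtoC 0)%C = x) by (intros; ring).
  exists (a + c)%C, b; repeat split.
  - eapply is_series_ext; [|exact (is_series_plus _ _ _ _ Ha (is_series_point c s))].
    intros n; cbv beta.
    destruct (Z.eq_dec (Z.of_nat n) (Z.of_nat s)), (Nat.eq_dec n s); try lia; apply Hsub.
  - eapply is_series_ext; [|exact Hb]; intros n; cbv beta.
    destruct (Z.eq_dec (- Z.of_nat (S n)) (Z.of_nat s)); [lia|].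
    apply Hsub0.
  - ring.
Qed.

Lemma zseries_geom_bound_sub (f : Z -> C) (s : nat) (c : C) (G r : R) :
  0 <= G -> 0 <= r < 1 ->
  (forall m, Cmod (f m - (if Z.eq_dec m (Z.of_nat s) then c else RtoC 0))%C
             <= G * r ^ Z.abs_nat (m - Z.of_nat s)) ->
  exists Sig, is_zseries f Sig /\ Cmod (Sig - c)%C <= 3 / (1 - r) * G.
Proof.
  intros HG Hr Hf.
  destruct (zseries_geom_bound _ s G r HG Hr Hf) as (Sig & HS & HSle).
  exists (Sig + c)%C; split; [exact (is_zseries_sub_point f s c Sig HS)|].
  replace (Sig + c - c)%C with Sig by ring; exact HSle.
Qed.

(** * Estimates for the summands *)

Lemma exp_le_exp (x y : R) : x <= y -> exp x <= exp y.
Proof. intros [H|H]; [left; apply exp_increasing, H|rewrite H; right; reflexivity]. Qed.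

Lemma sqrt_le_exp (x : R) : 0 <= x -> sqrt x <= exp x.
Proof.
  intros Hx; apply Rle_trans with (1 + x); [|apply exp_ineq1_le].
  apply Rsqr_incr_0_var; [|lra].
  rewrite Rsqr_sqrt by exact Hx; unfold Rsqr; nra.
Qed.

Lemma Rpower_quarter (y : R) : 0 < y -> Rpower y (1 / 4) = sqrt (sqrt y).
Proof.
  intros Hy.
  replace (1 / 4) with (/ 2 * / 2) by field.
  rewrite <- Rpower_mult, !Rpower_sqrt; [reflexivity|exact Hy|].
  unfold Rpower; apply exp_pos.
Qed.

Lemma Cmod_cexp (z : C) : Cmod (cexp z) = exp (fst z).
Proof.
  unfold Cmod, cexp; cbn [fst snd].
  replace ((exp (fst z) * cos (snd z)) ^ 2 + (exp (fst z) * sin (snd z)) ^ 2)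
    with (exp (fst z) ^ 2 * ((sin (snd z))² + (cos (snd z))²)) by (unfold Rsqr; ring).
  rewrite sin2_cos2, Rmult_1_r; apply sqrt_pow2, Rlt_le, exp_pos.
Qed.

Lemma Cmod_csqrt (w : C) : Cmod (csqrt w) = sqrt (Cmod w).
Proof.
  pose proof (re_le_Cmod w) as Hre; apply Rabs_le_between in Hre; unfold Re in Hre.
  unfold csqrt, Cmod at 1; cbn [fst snd]; f_equal.
  rewrite <- !Rsqr_pow2, Rsqr_mult, !Rsqr_sqrt by lra.
  destruct (Rle_dec 0 (snd w)); unfold Rsqr; field.
Qed.

Lemma Cmod_gt_0_of_fst (w : C) : 0 < fst w -> 0 < Cmod w.
Proof.
  intros Hw; eapply Rlt_le_trans; [|apply re_le_Cmod]; unfold Re; rewrite Rabs_pos_eq; lra.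
Qed.

Lemma Cmod_Tpref (y : R) (q : Z) (delta : R) : 0 < y -> (1 <= q)%Z ->
  Cmod (Tpref y q delta) = / (IZR q * sqrt (Cmod (y, 2 * delta))).
Proof.
  intros Hy Hq; apply IZR_le in Hq.
  assert (Hmod : Cmod (RtoC (IZR q) * csqrt (y, 2 * delta))
                 = IZR q * sqrt (Cmod (y, 2 * delta))).
  { rewrite Cmod_mult, Cmod_R, Cmod_csqrt, Rabs_pos_eq by lra; reflexivity. }
  unfold Tpref; rewrite Cmod_inv, Hmod; [reflexivity|].
  apply Cmod_gt_0; rewrite Hmod; apply Rmult_lt_0_compat; [lra|].
  apply sqrt_lt_R0, Cmod_gt_0_of_fst, Hy.
Qed.

(* [Re (- PI u^2 / (y + 2 i delta)) = - PI * gauss_decay * (m N - q)^2] for [u = m/q - 1/N]. *)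
Definition gauss_decay (N : nat) (y : R) (q : Z) (delta : R) : R :=
  y / ((y ^ 2 + (2 * delta) ^ 2) * (IZR q * INR N) ^ 2).

Lemma Cmod_Tterm_le (N : nat) (y : R) (p q : Z) (delta : R) (m : Z) :
  (0 < N)%nat -> 0 < y -> (1 <= q)%Z -> Z.gcd p q = 1%Z ->
  Cmod (Tterm N y p q delta m)
  <= sqrt (2 * IZR q) * exp (- PI * gauss_decay N y q delta * IZR (m * Z.of_nat N - q) ^ 2).
Proof.
  intros HN Hy Hq Hpq.
  assert (Hqn : IZR q = INR (Z.to_nat q)) by (rewrite INR_IZR_INZ, Z2Nat.id by lia; reflexivity).
  assert (HNr : INR N <> 0) by (apply not_0_INR; lia).
  assert (Hqr : IZR q <> 0) by (apply not_0_IZR; lia).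
  unfold Tterm; cbv zeta; rewrite Cmod_mult.
  apply Rmult_le_compat; try apply Cmod_ge_0.
  - rewrite Hqn; apply gaussS_Cmod_le; [lia|rewrite Z2Nat.id by lia; exact Hpq].
  - assert (Hw : y ^ 2 + (2 * delta) ^ 2 <> 0) by nra.
    rewrite Cmod_cexp; right; f_equal; unfold Cmult, Cinv, RtoC, gauss_decay; cbn [fst snd].
    rewrite minus_IZR, mult_IZR, <- INR_IZR_INZ; field; tauto.
Qed.

Lemma Tterm_center (N : nat) (y : R) (p q : Z) (delta : R) (m : Z) :
  (0 < N)%nat -> (1 <= q)%Z -> (m * Z.of_nat N = q)%Z ->
  Tterm N y p q delta m = gaussS (Z.to_nat q) (IZR p / IZR q) (1 / INR N).
Proof.
  intros HN Hq Hm.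
  assert (Hu : IZR m / IZR q = 1 / INR N).
  { rewrite <- Hm, mult_IZR, <- INR_IZR_INZ; field.
    split; [apply not_0_INR; lia|apply not_0_IZR; nia]. }
  unfold Tterm; cbv zeta; rewrite Hu.
  replace (- PI * (1 / INR N - 1 / INR N) ^ 2) with 0 by ring.
  rewrite Cmult_0_l; unfold cexp; simpl; rewrite exp_0, cos_0, sin_0.
  replace (1 * 1, 1 * 0) with (RtoC 1) by (unfold RtoC; f_equal; ring); apply Cmult_1_r.
Qed.

Lemma dist_le_two_mul_sqr (N q m : Z) : (1 <= N)%Z -> (m * N - q <> 0)%Z ->
  (1 + Z.abs (m - q / N) <= 2 * (m * N - q) ^ 2)%Z.
Proof.
  intros HN Hm.
  pose proof (Z.div_mod q N ltac:(lia)); pose proof (Z.mod_pos_bound q N ltac:(lia)).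
  set (s := (q / N)%Z) in *; set (t := (q mod N)%Z) in *.
  assert (Z.abs (m - s) <= Z.abs (m * N - q))%Z.
  { replace (m * N - q)%Z with ((m - s) * N - t)%Z by lia.
    destruct (Z_le_gt_dec (m - s) 0); nia. }
  assert (Z.abs (m * N - q) <= (m * N - q) ^ 2)%Z by nia.
  lia.
Qed.

(* Off the center, [2 (m N - q)^2 >= 1 + |m - q / N|] splits the Gaussian into a fixed factor
   and a geometric factor centered at [q / N]. *)
Lemma Tterm_off_center_le (N : nat) (y : R) (p q : Z) (delta : R) (m : Z) (A0 : R) :
  (0 < N)%nat -> 0 < y -> (1 <= q)%Z -> Z.gcd p q = 1%Z -> (m * Z.of_nat N <> q)%Z ->
  0 <= A0 <= gauss_decay N y q delta ->
  Cmod (Tterm N y p q delta m)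
  <= sqrt (2 * IZR q) * exp (- PI * gauss_decay N y q delta / 2)
     * exp (- PI * A0 / 2) ^ Z.abs_nat (m - q / Z.of_nat N).
Proof.
  intros HN Hy Hq Hpq Hm HA0.
  eapply Rle_trans; [apply Cmod_Tterm_le; assumption|].
  rewrite (Rmult_assoc (sqrt _)); apply Rmult_le_compat_l; [apply sqrt_pos|].
  set (A := gauss_decay N y q delta) in *.
  set (k := Z.abs_nat (m - q / Z.of_nat N)).
  assert (Hk : 1 + INR k <= 2 * IZR (m * Z.of_nat N - q) ^ 2).
  { unfold k; rewrite INR_IZR_INZ, Nat2Z.inj_abs_nat, pow_IZR.
    change 2 with (IZR 2); rewrite <- mult_IZR, <- plus_IZR.
    apply IZR_le, dist_le_two_mul_sqr; lia. }
  rewrite <- (Rpower_pow k (exp (- PI * A0 / 2))) by apply exp_pos.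
  unfold Rpower; rewrite ln_exp, <- exp_plus.
  apply exp_le_exp.
  pose proof (pos_INR k).
  assert (Hexp : A / 2 + A0 * INR k / 2 <= A * IZR (m * Z.of_nat N - q) ^ 2) by nra.
  pose proof (Rmult_le_compat_l PI _ _ (Rlt_le _ _ PI_RGT_0) Hexp); lra.
Qed.

Lemma gauss_decay_ge (N : nat) (y : R) (q : Z) (delta C1 C2 : R) :
  (0 < N)%nat -> 0 < y -> (1 <= q)%Z ->
  IZR q <= C1 * Rpower y (- (1 / 2)) -> IZR q * Rabs delta <= C2 * Rpower y (1 / 2) ->
  1 / ((C1 ^ 2 + 4 * C2 ^ 2) * INR N ^ 2) <= gauss_decay N y q delta.
Proof.
  intros HN Hy Hq HC1 HC2; apply IZR_le in Hq.
  replace (1 / 2) with (/ 2) in HC1, HC2 by field.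
  rewrite Rpower_Ropp, Rpower_sqrt in HC1 by exact Hy.
  rewrite Rpower_sqrt in HC2 by exact Hy.
  assert (Hsy : 0 < sqrt y) by (apply sqrt_lt_R0, Hy).
  assert (Hsyy : sqrt y * sqrt y = y) by (apply sqrt_sqrt; lra).
  assert (Hq1 : IZR q * sqrt y <= C1).
  { apply Rmult_le_compat_r with (r := sqrt y) in HC1; [|lra].
    rewrite Rmult_assoc, Rinv_l in HC1 by lra; lra. }
  assert (Hq2 : IZR q ^ 2 * y <= C1 ^ 2).
  { rewrite <- Hsyy; replace (IZR q ^ 2 * (sqrt y * sqrt y)) with ((IZR q * sqrt y) ^ 2) by ring.
    apply pow_incr; split; [nra|exact Hq1]. }
  assert (Hd2 : IZR q ^ 2 * delta ^ 2 <= C2 ^ 2 * y).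
  { rewrite <- Hsyy, <- (pow2_abs delta).
    replace (IZR q ^ 2 * Rabs delta ^ 2) with ((IZR q * Rabs delta) ^ 2) by ring.
    replace (C2 ^ 2 * (sqrt y * sqrt y)) with ((C2 * sqrt y) ^ 2) by ring.
    apply pow_incr; split; [pose proof (Rabs_pos delta); nra|exact HC2]. }
  assert (HN2 : 0 < INR N ^ 2) by (apply pow_lt, lt_0_INR, HN).
  assert (Hden : (y ^ 2 + (2 * delta) ^ 2) * IZR q ^ 2 <= (C1 ^ 2 + 4 * C2 ^ 2) * y).
  { assert (y * (IZR q ^ 2 * y) <= y * C1 ^ 2) by (apply Rmult_le_compat_l; lra).
    nra. }
  assert (0 < (y ^ 2 + (2 * delta) ^ 2) * IZR q ^ 2)
    by (apply Rmult_lt_0_compat; [|apply pow_lt]; nra).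
  assert (0 < C1 ^ 2 + 4 * C2 ^ 2) by nra.
  set (E := (y ^ 2 + (2 * delta) ^ 2) * IZR q ^ 2) in *.
  set (D := C1 ^ 2 + 4 * C2 ^ 2) in *.
  assert (Hdiff : y / (E * INR N ^ 2) - 1 / (D * INR N ^ 2) = (D * y - E) / (D * E * INR N ^ 2))
    by (field; repeat split; try lra; apply not_0_INR; lia).
  assert (0 <= (D * y - E) / (D * E * INR N ^ 2))
    by (apply Rdiv_le_0_compat; [lra|apply Rmult_lt_0_compat; [nra|lra]]).
  unfold gauss_decay; rewrite (Rpow_mult_distr (IZR q)), <- Rmult_assoc; fold E; lra.
Qed.

(* With [y = A (q W n)^2] the claim reduces to [sqrt A * exp (- PI * A) <= 1]. *)
Lemma prefactor_decay_le (q W n y A : R) : 0 < q -> 0 < W -> 0 < n -> 0 < y ->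
  y = A * (q * W * n) ^ 2 ->
  / (q * sqrt W) * (sqrt (2 * q) * exp (- PI * A / 2)) <= sqrt (2 * n) * Rpower y (- (1 / 4)).
Proof.
  intros Hq HW Hn Hy HyA.
  assert (HQ : 0 < q * W * n) by (repeat apply Rmult_lt_0_compat; assumption).
  assert (HA : 0 < A) by (pose proof (pow_lt _ 2 HQ); nra).
  assert (Hsy : sqrt y = sqrt A * (q * W * n))
    by (rewrite HyA, sqrt_mult_alt, sqrt_pow2 by lra; reflexivity).
  assert (HsA : 0 < sqrt A) by (apply sqrt_lt_R0, HA).
  assert (Hkey : exp (- PI * A) * sqrt A <= 1).
  { apply Rle_trans with (exp (- PI * A) * exp (PI * A)).
    - apply Rmult_le_compat_l; [apply Rlt_le, exp_pos|].
      apply Rle_trans with (exp A); [apply sqrt_le_exp; lra|apply exp_le_exp].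
      pose proof PI2_1; nra.
    - rewrite <- exp_plus, <- exp_0; right; f_equal; ring. }
  rewrite Rpower_Ropp, Rpower_quarter by exact Hy.
  apply Rsqr_incr_0_var.
  2: { apply Rmult_le_pos; [apply sqrt_pos|].
       apply Rlt_le, Rinv_0_lt_compat, sqrt_lt_R0, sqrt_lt_R0, Hy. }
  assert (He : (exp (- PI * A / 2))² = exp (- PI * A))
    by (unfold Rsqr; rewrite <- exp_plus; f_equal; field).
  rewrite !Rsqr_mult, !Rsqr_inv', He, Rsqr_mult, (Rsqr_sqrt (sqrt y)), Hsy by apply sqrt_pos.
  rewrite !Rsqr_sqrt by lra.
  replace (/ (q² * W) * (2 * q * exp (- PI * A)))
    with (2 / (q * W) * exp (- PI * A)) by (unfold Rsqr; field; lra).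
  replace (2 * n * / (sqrt A * (q * W * n)))
    with (2 / (q * W) * / sqrt A) by (field; lra).
  apply Rmult_le_compat_l; [apply Rdiv_le_0_compat; nra|].
  apply Rmult_le_reg_r with (sqrt A); [exact HsA|].
  rewrite Rinv_l by lra; exact Hkey.
Qed.

Lemma Cmod_Tpref_mul_le (N : nat) (y : R) (q : Z) (delta : R) (z : C) (B : R) :
  (0 < N)%nat -> 0 < y -> (1 <= q)%Z -> 0 <= B ->
  Cmod z <= B * (sqrt (2 * IZR q) * exp (- PI * gauss_decay N y q delta / 2)) ->
  Cmod (Tpref y q delta * z) <= B * sqrt (2 * INR N) * Rpower y (- (1 / 4)).
Proof.
  intros HN Hy Hq HB Hz; pose proof (IZR_le _ _ Hq).
  assert (HNr : INR N <> 0) by (apply not_0_INR; lia).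
  assert (HW : 0 < Cmod (y, 2 * delta)) by (apply Cmod_gt_0_of_fst, Hy).
  assert (HW2 : Cmod (y, 2 * delta) ^ 2 = y ^ 2 + (2 * delta) ^ 2) by (apply pow2_sqrt; nra).
  set (G := sqrt (2 * IZR q) * exp (- PI * gauss_decay N y q delta / 2)) in *.
  assert (HG : Cmod (Tpref y q delta) * G <= sqrt (2 * INR N) * Rpower y (- (1 / 4))).
  { rewrite Cmod_Tpref by assumption.
    apply prefactor_decay_le; [lra|exact HW|apply lt_0_INR; lia|exact Hy|].
    unfold gauss_decay; rewrite <- HW2; field; repeat split; lra. }
  rewrite Cmod_mult, Rmult_assoc.
  apply Rle_trans with (Cmod (Tpref y q delta) * (B * G)).
  - apply Rmult_le_compat_l; [apply Cmod_ge_0|exact Hz].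
  - replace (Cmod (Tpref y q delta) * (B * G)) with (B * (Cmod (Tpref y q delta) * G)) by ring.
    apply Rmult_le_compat_l; assumption.
Qed.

(* The main term: the summand with [m N = q], which exists only when [N | q]. *)
Definition Tcenter (N : nat) (p q : Z) : C :=
  if Zdivide_dec (Z.of_nat N) q then gaussS (Z.to_nat q) (IZR p / IZR q) (1 / INR N)
  else RtoC 0.

Lemma Tterm_sub_center_le (N : nat) (y : R) (p q : Z) (delta : R) (m : Z) (A0 : R) :
  (0 < N)%nat -> 0 < y -> (1 <= q)%Z -> Z.gcd p q = 1%Z ->
  0 <= A0 <= gauss_decay N y q delta ->
  Cmod (Tterm N y p q delta m
        - (if Z.eq_dec m (q / Z.of_nat N) then Tcenter N p q else RtoC 0))%C
  <= sqrt (2 * IZR q) * exp (- PI * gauss_decay N y q delta / 2)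
     * exp (- PI * A0 / 2) ^ Z.abs_nat (m - q / Z.of_nat N).
Proof.
  intros HN Hy Hq Hpq HA0.
  assert (Hbound_nonneg : 0 <= sqrt (2 * IZR q) * exp (- PI * gauss_decay N y q delta / 2)
                               * exp (- PI * A0 / 2) ^ Z.abs_nat (m - q / Z.of_nat N)).
  { apply Rmult_le_pos; [apply Rmult_le_pos; [apply sqrt_pos|]|apply pow_le];
      apply Rlt_le, exp_pos. }
  destruct (Z.eq_dec (m * Z.of_nat N) q) as [Hc|Hc].
  - assert (Hm : m = (q / Z.of_nat N)%Z) by (rewrite <- Hc, Z.div_mul; lia).
    destruct (Z.eq_dec m (q / Z.of_nat N)); [|contradiction].
    unfold Tcenter; destruct (Zdivide_dec (Z.of_nat N) q) as [_|Hndiv].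
    2: { exfalso; apply Hndiv; exists m; lia. }
    rewrite <- (Tterm_center N y p q delta m) by assumption.
    replace (Tterm N y p q delta m - Tterm N y p q delta m)%C with (RtoC 0) by ring.
    rewrite Cmod_0; exact Hbound_nonneg.
  - replace (if Z.eq_dec m (q / Z.of_nat N) then Tcenter N p q else RtoC 0) with (RtoC 0).
    2: { destruct (Z.eq_dec m (q / Z.of_nat N)) as [->|]; [|reflexivity].
         unfold Tcenter; destruct (Zdivide_dec (Z.of_nat N) q) as [[k Hk]|]; [|reflexivity].
         exfalso; apply Hc; rewrite Hk, Z.div_mul; lia. }
    replace (Tterm N y p q delta m - RtoC 0)%C with (Tterm N y p q delta m) by ring.
    apply Tterm_off_center_le; assumption.
Qed.

Theorem lemma1 (N : nat) (C1 C2 : R) :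
  (1 < N)%nat -> 0 < C1 -> 0 < C2 ->
  exists K : R,
    forall (y : R) (p q : Z) (delta : R),
      0 < y -> y <= 1 ->
      Z.gcd p q = 1%Z -> (1 <= q)%Z ->
      0 < IZR p / IZR q -> IZR p / IZR q <= 1 ->
      IZR q <= C1 * Rpower y (- (1 / 2)) ->
      IZR q * Rabs delta <= C2 * Rpower y (1 / 2) ->
      exists Sig : C,
        is_zseries (Tterm N y p q delta) Sig /\
        ((Z.divide (Z.of_nat N) q) ->
           Cmod (Cminus (Cmult (Tpref y q delta) Sig)
                 (Cmult (gaussS (Z.to_nat q) (IZR p / IZR q) (1 / INR N))
                        (Tpref y q delta)))
           <= K * Rpower y (- (1 / 4))) /\
        (~ Z.divide (Z.of_nat N) q ->
           Cmod (Cmult (Tpref y q delta) Sig) <= K * Rpower y (- (1 / 4))).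
Proof.
  intros HN HC1 HC2.
  set (A0 := 1 / ((C1 ^ 2 + 4 * C2 ^ 2) * INR N ^ 2)).
  set (r := exp (- PI * A0 / 2)).
  assert (HA0 : 0 < A0).
  { apply Rdiv_lt_0_compat; [lra|apply Rmult_lt_0_compat; [|apply pow_lt, lt_0_INR; lia]].
    pose proof (pow_lt _ 2 HC1); pose proof (pow_lt _ 2 HC2); lra. }
  assert (Hr : 0 <= r < 1).
  { split; [apply Rlt_le, exp_pos|rewrite <- exp_0; apply exp_increasing].
    pose proof PI_RGT_0; nra. }
  exists (3 / (1 - r) * sqrt (2 * INR N)).
  intros y p q delta Hy _ Hpq Hq _ _ HqC1 HqC2.
  set (G := sqrt (2 * IZR q) * exp (- PI * gauss_decay N y q delta / 2)).
  assert (HG : 0 <= G) by (apply Rmult_le_pos; [apply sqrt_pos|apply Rlt_le, exp_pos]).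
  assert (HAA0 : A0 <= gauss_decay N y q delta) by (apply gauss_decay_ge; lia || assumption).
  destruct (zseries_geom_bound_sub (Tterm N y p q delta) (Z.to_nat (q / Z.of_nat N))
              (Tcenter N p q) G r HG Hr) as (Sig & HS & HSc).
  { intros m; rewrite Z2Nat.id by (apply Z.div_pos; lia).
    apply Tterm_sub_center_le; try assumption; try lia; lra. }
  assert (Hmain : Cmod (Tpref y q delta * (Sig - Tcenter N p q))%C
                  <= 3 / (1 - r) * sqrt (2 * INR N) * Rpower y (- (1 / 4)))
    by (apply Cmod_Tpref_mul_le; try assumption; try lia; apply Rdiv_le_0_compat; lra).
  exists Sig; split; [exact HS|].
  unfold Tcenter in Hmain; destruct (Zdivide_dec (Z.of_nat N) q); split; intros; try contradiction.
  - replace (Tpref y q delta * Sig - _ * Tpref y q delta)%C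
      with (Tpref y q delta * (Sig - gaussS (Z.to_nat q) (IZR p / IZR q) (1 / INR N)))%C
      by ring; exact Hmain.
  - replace Sig with (Sig - RtoC 0)%C at 1 by ring; exact Hmain.
Qed.
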